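(* Let $\gamma$ and $\alpha$ be weak compositions of $m$ with $n$ parts and let $\sigma\in S_n$. Denote by $c_\gamma$ the coefficient of the monomial $x_{\sigma_1}^{\gamma_1}x_{\sigma_2}^{\gamma_2}\cdots x_{\sigma_n}^{\gamma_n}$ in $\mathrm{E}^\sigma_\alpha(\mathbf{x};q,t)$. Then $c_\gamma=0$ if $\mathrm{sort}(\gamma)>_{\mathrm{lex}}\mathrm{sort}(\alpha)$; $c_\gamma=0$ if $\mathrm{sort}(\gamma)=\mathrm{sort}(\alpha)$ and $\gamma>_{\mathrm{lex}}\alpha$; and $c_\gamma=1$ if $\gamma=\alpha$.
   Context: Fix $n\ge1$. A composition is $\alpha=(\alpha_1,\dots,\alpha_n)\in\mathbb{Z}_{\ge0}^n$; $\mathrm{sort}(\alpha)$ is the partition obtained by sorting the parts of $\alpha$ in weakly decreasing order, and $>_{\mathrm{lex}}$ is the lexicographic order comparing entries from left to right. Permutations $\sigma\in S_n$ are written in one-line notation $(\sigma_1,\dots,\sigma_n)$. Permuted-basement Macdonald polynomials: the augmented diagram of shape $\alpha$ has rows $r=1,\dots,n$ numbered top to bottom and columns numbered left to right starting from $0$; row $r$ consists of the basement box $(r,0)$ and the boxes $(r,c)$, $1\le c\le\alpha_r$. An augmented filling with basement $\sigma$ is a map $F$ from all boxes to $\{1,\dots,n\}$ with $F(r,0)=\sigma_r$. It is non-attacking if no two distinct boxes have equal entries while lying either in the same column, or in columns $c-1$ and $c$ with the box in column $c$ in a strictly lower row (larger row index) than the box in column $c-1$. Let $\mathrm{NAF}_\sigma(\alpha)$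 be the set of non-attacking such fillings. For a non-basement box $u=(r,c)$ put $d(u)=(r,c-1)$, $\mathrm{leg}(u)=\alpha_r-c$, and $\mathrm{arm}(u)=|\{r'>r: c\le\alpha_{r'}\le\alpha_r\}|+|\{r'<r: c-1\le\alpha_{r'}<\alpha_r\}|$. A non-basement box $u$ is a descent if $F(d(u))<F(u)$; $\mathrm{maj}(F)=\sum_{u\text{ descent}}(\mathrm{leg}(u)+1)$. A type A triple is a triple of boxes $a=(r,c-1)$, $b=(r,c)$, $e=(r',c)$ with $c\ge1$, $r'>r$, $c\le\alpha_{r'}\le\alpha_r$; a type B triple is $a=(r,c-1)$, $b=(r,c)$, $e=(r',c-1)$ with $c\ge1$, $r'<r$, $c-1\le\alpha_{r'}<\alpha_r$. Order the three boxes by their entries, breaking ties so that $a>e>b$; the triple is an inversion triple if $b<a<e$, $a<e<b$ or $e<b<a$ (for type A this means the boxes listed in increasing order go around counter-clockwise, for type B clockwise). $\mathrm{coinv}(F)$ is the number of type A and type B triples that are not inversion triples. Let $\mathbf{x}^F=\prod_{u\text{ non-basement}}x_{F(u)}$. Then $$\mathrm{E}^\sigma_\alpha(\mathbf{x};q,t)=\sum_{F\in\mathrm{NAF}_\sigma(\alpha)}\mathbf{x}^Fq^{\mathrm{maj}F}t^{\mathrm{coinv}F}\prod_{\substack{u\text{ non-basement}\\ F(u)\ne F(d(u))}}\frac{1-t}{1-q^{1+\mathrm{leg}(u)}t^{1+\mathrm{arm}(u)}}\in\mathbb{Q}(q,t)[x_1,\dots,x_n].$$ *)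

From HB Require Import structures.
From mathcomp Require Import all_boot all_order all_algebra all_fingroup.
From mathcomp Require Import fraction.
Set Implicit Arguments. Unset Strict Implicit. Unset Printing Implicit Defensive.
Import Order.TTheory GRing.Theory Num.Theory.

(* Conventions: rows 1..n of the paper are 'I_n (0..n-1), entries 1..n are
   'I_n (0..n-1, shifted by one; this preserves all comparisons).
   Columns are natural numbers 0..N with N = max part of alpha; column 0 is
   the basement.  A filling is a finite function on the grid 'I_n * 'I_N.+1;
   cells outside the augmented diagram (c > alpha_r) are normalised to sigma_r
   so that fillings of the augmented diagram correspond bijectively to
   normalised grid functions. *)

(* Q(q,t) := fraction field of Q[t][q]... concretely {poly {poly rat}},
   q = inner variable, t = outer variable. *)
Definition Kqt := {fraction {poly {poly rat}}}.
Definition qv : Kqt := tofrac (('X : {poly rat})%:P).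
Definition tv : Kqt := tofrac ('X : {poly {poly rat}}).

Fixpoint lex_gt (s1 s2 : seq nat) : bool :=
  match s1, s2 with
  | x :: s, y :: t => (y < x) || ((x == y) && lex_gt s t)
  | _, _ => false
  end.

Definition sortc (s : seq nat) : seq nat := sort geq s.

Section PB.
Variables (n : nat) (alpha : n.-tuple nat) (sigma : {perm 'I_n}).

Definition al (r : 'I_n) : nat := tnth alpha r.
Definition Ncol : nat := \max_(r < n) al r.

Definition filling := {ffun 'I_n * 'I_Ncol.+1 -> 'I_n}.

Definition ent (F : filling) (r : 'I_n) (c : nat) : nat := F (r, inord c).

Definition nbbox (r : 'I_n) (c : nat) : bool := (1 <= c) && (c <= al r).

Definition basement_ok (F : filling) : bool :=
  [forall r : 'I_n, F (r, ord0) == sigma r].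

Definition normalised (F : filling) : bool :=
  [forall r : 'I_n, forall c : 'I_Ncol.+1, (al r < c) ==> (F (r, c) == sigma r)].

Definition non_attacking (F : filling) : bool :=
  [forall r1 : 'I_n, forall r2 : 'I_n, forall c : 'I_Ncol.+1,
     [&& r1 != r2, c <= al r1 & c <= al r2] ==> (F (r1, c) != F (r2, c))]
  &&
  [forall r1 : 'I_n, forall r2 : 'I_n, forall c : 'I_Ncol.+1,
     [&& 1 <= c, c.-1 <= al r1, c <= al r2 & r1 < r2] ==>
        (ent F r1 c.-1 != F (r2, c))].

Definition NAF (F : filling) : bool :=
  [&& basement_ok F, normalised F & non_attacking F].

Definition leg (r : 'I_n) (c : nat) : nat := al r - c.
Definition arm (r : 'I_n) (c : nat) : nat :=
  #|[set r' : 'I_n | (r < r') && (c <= al r' <= al r)]|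
  + #|[set r' : 'I_n | (r' < r) && (c.-1 <= al r') && (al r' < al r)]|.

Definition is_descent (F : filling) (r : 'I_n) (c : nat) : bool :=
  ent F r c.-1 < ent F r c.

Definition maj (F : filling) : nat :=
  \sum_(r < n) \sum_(1 <= c < (al r).+1)
     (if is_descent F r c then (leg r c).+1 else 0).

(* inversion triple: order boxes by entries, ties broken so that a > e > b;
   encoded by keys 3*v+2 (a), 3*v+1 (e), 3*v (b). *)
Definition inv_triple (va vb ve : nat) : bool :=
  let ka := 3 * va + 2 in let ke := 3 * ve + 1 in let kb := 3 * vb in
  [|| (kb < ka) && (ka < ke), (ka < ke) && (ke < kb) | (ke < kb) && (kb < ka)].

Definition typeA (r r' : 'I_n) (c : nat) : bool :=
  [&& 1 <= c, r < r' & c <= al r' <= al r].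
Definition typeB (r r' : 'I_n) (c : nat) : bool :=
  [&& 1 <= c, r' < r, c.-1 <= al r' & al r' < al r].

Definition coinv (F : filling) : nat :=
  \sum_(r < n) \sum_(r' < n) \sum_(c < Ncol.+1)
    ((typeA r r' c && ~~ inv_triple (ent F r c.-1) (ent F r c) (ent F r' c))
     + (typeB r r' c && ~~ inv_triple (ent F r c.-1) (ent F r c) (ent F r' c.-1))).

Local Open Scope ring_scope.

Definition weight (F : filling) : Kqt :=
  qv ^+ maj F * tv ^+ coinv F *
  \prod_(r < n) \prod_(1 <= c < (al r).+1 | ent F r c != ent F r c.-1)
     ((1 - tv) / (1 - qv ^+ (leg r c).+1 * tv ^+ (arm r c).+1)).

(* content condition: x^F = x_{sigma_1}^{gamma_1} ... x_{sigma_n}^{gamma_n},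
   i.e. exactly gamma_r non-basement boxes carry the entry sigma_r *)
Definition has_content (gamma : n.-tuple nat) (F : filling) : bool :=
  [forall r : 'I_n,
     #|[set u : 'I_n * 'I_Ncol.+1 | nbbox u.1 u.2 && (F u == sigma r)]|
       == tnth gamma r].

(* coefficient of x_{sigma_1}^{gamma_1}...x_{sigma_n}^{gamma_n} in E^sigma_alpha:
   E^sigma_alpha = sum_F x^F * weight F, so this coefficient is the sum of the
   weights of the non-attacking fillings with that monomial. *)
Definition coefEsig (gamma : n.-tuple nat) : Kqt :=
  \sum_(F : filling | NAF F && has_content gamma F) weight F.

End PB.

From HB Require Import structures.
From mathcomp Require Import all_boot all_order all_algebra all_fingroup.
From mathcomp Require Import fraction zify.
Set Implicit Arguments. Unset Strict Implicit. Unset Printing Implicit Defensive.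
Import GRing.Theory.

(* Fix a non-attacking filling F with content gamma and a threshold t, and let
   U_t be the set of entries occurring at least t times.  Entries in a column
   are distinct, so column c holds at most #|U_t| cells with entries in U_t,
   and at most col_height c cells at all.  Summing over columns and comparing
   with the total count t #|U_t| + sum_r (gamma_r - t)_+ shows that if the
   tails sum_r (gamma_r - t)_+ and sum_r (alpha_r - t)_+ agree then
   #|U_t| <= #{r | alpha_r >= t}, and that under equality every column
   1..t contains every entry of U_t.  Lexicographic comparison of sort(gamma)
   and sort(alpha) produces a threshold contradicting the first fact.  When
   sort(gamma) = sort(alpha) the second fact forces, row by row from the top,
   row r to be constant equal to sigma_r (an entry sigma_s in row r > s would
   attack the box to its lower left), so gamma_r <= alpha_r at the first
   difference, and for gamma = alpha the constant-row filling, of weight 1,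
   is the only one. *)

Lemma card_set_sum (T : finType) (P : pred T) : #|[set x | P x]| = \sum_x (P x : nat).
Proof. by rewrite -sum1dep_card big_mkcond. Qed.

Lemma sum_ord_indicator_between (a t M : nat) :
  \sum_(c < M) ((t < c) && (c <= a) : nat) = minn a.+1 M - minn t.+1 M.
Proof.
elim: M => [|M IH]; first by rewrite big_ord0; lia.
rewrite big_ord_recr /= IH.
by have [] := ltnP t M; have [] := leqP M a; rewrite /=; lia.
Qed.

Lemma eq_of_sum_geq (I : finType) (f g : I -> nat) :
  (forall i, f i <= g i) -> \sum_i g i <= \sum_i f i -> forall i, f i = g i.
Proof.
move=> le_fg le_sum i.
have [_ /esym] := @leqif_sum I predT (fun j => f j == g j) f g
  (fun j _ => leqif_eq (le_fg j)).
rewrite eqn_leq le_sum leq_sum => [/forall_inP/(_ i isT)/eqP //|j _]; exact: le_fg.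
Qed.

Lemma sorted_geq_lex_gt_count (s1 s2 : seq nat) :
  sorted geq s1 -> sorted geq s2 -> lex_gt s1 s2 ->
  exists t, count (leq t) s2 < count (leq t) s1 /\
            \sum_(x <- s1) (x - t) = \sum_(x <- s2) (x - t).
Proof.
elim: s1 s2 => [|x s1 IH] [|y s2] //= sorted1 sorted2.
case/orP => [lt_yx | /andP[/eqP<- gt12]]; last first.
  have [t [lt_cnt eq_sum]] := IH s2 (path_sorted sorted1) (path_sorted sorted2) gt12.
  by exists t; rewrite !big_cons eq_sum ltn_add2l.
have geq_tail (z : nat) s : path geq z s -> all (geq z) s.
  by apply: order_path_min => a b c /[swap]; apply: leq_trans.
have small2 z : z \in s2 -> z < x.
  by move/(allP (geq_tail _ _ sorted2)) => /leq_ltn_trans; apply.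
exists x; split.
  rewrite leqnn (leqNgt x y) lt_yx (@eq_in_count _ _ pred0) ?count_pred0 //.
  by move=> z /small2; rewrite ltnNge => /negbTE.
have sub0 z : z <= x -> z - x = 0 by move=> le_zx; apply/eqP; rewrite subn_eq0.
rewrite !big_cons subnn sub0 ?(ltnW lt_yx) // !big1_seq //.
  by move=> z /andP[_ /small2/ltnW/sub0].
by move=> z /andP[_ /(allP (geq_tail _ _ sorted1))/sub0].
Qed.

Lemma lex_gt_nth (s1 s2 : seq nat) : lex_gt s1 s2 ->
  exists2 i, i < size s1 &
    (forall j, j < i -> nth 0 s1 j = nth 0 s2 j) /\ nth 0 s2 i < nth 0 s1 i.
Proof.
elim: s1 s2 => [|x s1 IH] [|y s2] //=.
case/orP => [lt_yx | /andP[/eqP<- /IH[i lt_i [eq_pre lt_at]]]].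
  by exists 0 => //; split => // j; rewrite ltn0.
by exists i.+1 => //; split => // -[|j] //= /eq_pre.
Qed.

Lemma sortc_sorted (s : seq nat) : sorted geq (sortc s).
Proof. by apply: sort_sorted => a b; apply: leq_total. Qed.

Lemma perm_sortc (s : seq nat) : perm_eq (sortc s) s.
Proof. by rewrite perm_sort. Qed.

Section NonAttackingFillings.
Variables (n : nat) (alpha : n.-tuple nat) (sigma : {perm 'I_n}).
Local Notation N := (Ncol alpha).
Local Notation al := (al alpha).
Local Notation filling := (filling alpha).

Lemma al_le_Ncol r : al r <= N.
Proof. by rewrite /Ncol (bigmax_sup r). Qed.

Section NAFProperties.
Variable F : filling.
Hypothesis nafF : NAF sigma F.

Lemma NAF_basement r : F (r, ord0) = sigma r.
Proof. by case/and3P: nafF => /forallP/(_ r)/eqP. Qed.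

Lemma NAF_outside r (c : 'I_N.+1) : al r < c -> F (r, c) = sigma r.
Proof. by case/and3P: nafF => _ /forallP/(_ r)/forallP/(_ c)/implyP H _ /H/eqP. Qed.

Lemma NAF_column_inj r1 r2 (c : 'I_N.+1) :
  c <= al r1 -> c <= al r2 -> F (r1, c) = F (r2, c) -> r1 = r2.
Proof.
case/and3P: nafF => _ _ /andP[/forallP + _] le1 le2 eqF.
move/(_ r1)/forallP/(_ r2)/forallP/(_ c); rewrite le1 le2 eqF eqxx !andbT implybF.
by move/negbNE/eqP.
Qed.

Lemma NAF_diagonal r1 r2 (c : 'I_N.+1) :
  0 < c -> c.-1 <= al r1 -> c <= al r2 -> r1 < r2 -> ent F r1 c.-1 != F (r2, c).
Proof.
case/and3P: nafF => _ _ /andP[_ /forallP H] c_gt0 le1 le2 lt12.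
by move: (H r1) => /forallP/(_ r2)/forallP/(_ c)/implyP; apply; rewrite c_gt0 le1 le2.
Qed.

End NAFProperties.

Definition multiplicity (F : filling) (v : 'I_n) : nat :=
  #|[set u : 'I_n * 'I_N.+1 | nbbox alpha u.1 u.2 && (F u == v)]|.

Definition col_cells (F : filling) (U : {set 'I_n}) (c : 'I_N.+1) : {set 'I_n} :=
  [set r | nbbox alpha r c && (F (r, c) \in U)].

Definition col_height (c : nat) : nat := \sum_(r < n) (c <= al r : nat).

(* Columns [1..t] can hold every value of [U] once; the higher ones are
   limited by the diagram. *)
Definition col_capacity (t k c : nat) : nat :=
  ((0 < c) && (c <= t)) * k + (t < c) * col_height c.

Lemma sum_card_col_cells F U :
  \sum_(c < N.+1) #|col_cells F U c| = \sum_(v in U) multiplicity F v.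
Proof.
rewrite /col_cells /multiplicity.
rewrite (eq_bigr _ (fun c _ => card_set_sum _)) /=.
rewrite [RHS](eq_bigr _ (fun v _ => card_set_sum _)) /=.
rewrite exchange_big /= [RHS]exchange_big pair_bigA /=.
apply: eq_bigr => -[r c] _ /=.
have [inU | notinU] := boolP (F (r, c) \in U); last first.
  rewrite andbF big1 // => v vU.
  by have [Fv | _] := eqVneq (F (r, c)) v; [rewrite Fv vU in notinU | rewrite andbF].
rewrite andbT (bigD1 (F (r, c))) //= eqxx andbT big1 ?addn0 // => v /andP[_ ne_v].
by rewrite eq_sym (negbTE ne_v) andbF.
Qed.

Lemma sum_col_capacity t k :
  \sum_(c < N.+1) col_capacity t k c = minn t N * k + \sum_(x <- alpha) (x - t).
Proof.
rewrite big_tuple big_split /= -big_distrl /= sum_ord_indicator_between; congr (_ + _).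
  by have -> : minn t.+1 N.+1 - minn 1 N.+1 = minn t N by lia.
rewrite /col_height (eq_bigr _ (fun c _ => big_distrr _ _ _)) exchange_big /=.
apply: eq_bigr => r _.
transitivity (\sum_(c < N.+1) ((t < c) && (c <= al r) : nat)).
  by apply: eq_bigr => c _; rewrite mulnb.
by rewrite sum_ord_indicator_between; have := al_le_Ncol r; rewrite /al; lia.
Qed.

Lemma card_col_cells_le_card F U c : NAF sigma F -> #|col_cells F U c| <= #|U|.
Proof.
move=> nafF; rewrite -(@card_in_imset _ _ (fun r => F (r, c))).
  by apply/subset_leq_card/subsetP => v /imsetP[r]; rewrite inE => /andP[_ FU] ->.
move=> r1 r2; rewrite !inE => /andP[/andP[_ le1] _] /andP[/andP[_ le2] _].
exact: NAF_column_inj.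
Qed.

Lemma card_col_cells_le_height F U (c : 'I_N.+1) : #|col_cells F U c| <= col_height c.
Proof.
rewrite /col_cells card_set_sum; apply: leq_sum => r _.
have [_ | lt_al] := leqP c (al r); first exact: leq_b1.
by rewrite /nbbox (leqNgt c) lt_al andbF.
Qed.

Lemma card_col_cells_le_capacity F U t (c : 'I_N.+1) :
  NAF sigma F -> #|col_cells F U c| <= col_capacity t #|U| c.
Proof.
move=> nafF; have [c0 | c_gt0] := posnP c.
  by rewrite /col_cells card_set_sum big1 // => r _; rewrite /nbbox c0.
rewrite /col_capacity c_gt0; case: leqP => [le_ct | lt_tc] /=.
  by rewrite mul1n mul0n addn0 card_col_cells_le_card.
by rewrite mul0n mul1n card_col_cells_le_height.
Qed.

Lemma col_height_count c : col_height c = count (leq c) alpha.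
Proof. by rewrite -sum1_count big_tuple big_mkcond. Qed.

Section Content.
Variables (gamma : n.-tuple nat) (F : filling).
Hypotheses (nafF : NAF sigma F) (contF : has_content sigma gamma F).

Definition heavy (t : nat) : {set 'I_n} := [set v | t <= multiplicity F v].

Lemma multiplicity_sigma r : multiplicity F (sigma r) = tnth gamma r.
Proof. by move/forallP: contF => /(_ r)/eqP. Qed.

Lemma card_heavy t : #|heavy t| = count (leq t) gamma.
Proof.
rewrite card_set_sum -sum1_count big_tuple [RHS]big_mkcond.
rewrite (reindex_inj (@perm_inj _ sigma)) /=.
by apply: eq_bigr => r _; rewrite multiplicity_sigma.
Qed.

Lemma sum_card_col_cells_heavy t :
  \sum_(c < N.+1) #|col_cells F (heavy t) c| = t * #|heavy t| + \sum_(x <- gamma) (x - t).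
Proof.
rewrite sum_card_col_cells big_tuple.
transitivity (\sum_(v in heavy t) (t + (multiplicity F v - t))).
  by apply: eq_bigr => v; rewrite inE => le_t; rewrite subnKC.
rewrite big_split /= sum_nat_const mulnC; congr (_ + _).
rewrite big_mkcond (reindex_inj (@perm_inj _ sigma)) /=.
apply: eq_bigr => r _; rewrite inE multiplicity_sigma.
by case: leqP => // /ltnW; rewrite -subn_eq0 => /eqP->.
Qed.

Lemma content_le_Ncol s : tnth gamma s <= N.
Proof.
rewrite -multiplicity_sigma.
have -> : multiplicity F (sigma s) = \sum_(c < N.+1) #|col_cells F [set sigma s] c|.
  by rewrite sum_card_col_cells big_set1.
apply: (@leq_trans (\sum_(c < N.+1) col_capacity N #|[set sigma s]| c)).
  by apply: leq_sum => c _; apply: card_col_cells_le_capacity.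
rewrite sum_col_capacity cards1 minnn muln1 big_tuple big1 ?addn0 // => r _.
by apply/eqP; rewrite subn_eq0 al_le_Ncol.
Qed.

Section EqualTails.
Variable t : nat.
Hypothesis eq_tail : \sum_(x <- gamma) (x - t) = \sum_(x <- alpha) (x - t).

Lemma card_col_cells_heavy (c : 'I_N.+1) :
  #|col_cells F (heavy t) c| = col_capacity t #|heavy t| c.
Proof.
have le_cap (d : 'I_N.+1) : #|col_cells F (heavy t) d| <= col_capacity t #|heavy t| d.
  exact: card_col_cells_le_capacity.
apply: (eq_of_sum_geq le_cap).
rewrite sum_col_capacity sum_card_col_cells_heavy eq_tail.
by rewrite leq_add2r leq_mul2r geq_minl orbT.
Qed.

Lemma count_geq_content_le : count (leq t) gamma <= count (leq t) alpha.
Proof.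
have [-> | t_gt0] := posnP t.
  by rewrite !(@eq_count _ _ predT) // !count_predT !size_tuple.
rewrite leqNgt; apply/negP => lt_count.
have /hasP[_ /tnthP[s ->] le_ts] : has (leq t) gamma.
  by rewrite has_count (leq_ltn_trans _ lt_count).
have le_tN : t <= N := leq_trans le_ts (content_le_Ncol s).
have := card_col_cells_heavy (inord t).
rewrite /col_capacity inordK ?ltnS // t_gt0 leqnn ltnn /= mul1n mul0n addn0 => eq_card.
have := card_col_cells_le_height F (heavy t) (inord t).
by rewrite eq_card inordK ?ltnS // col_height_count card_heavy leqNgt lt_count.
Qed.

End EqualTails.

Lemma NAF_column_contains s (c : 'I_N.+1) :
  \sum_(x <- gamma) (x - tnth gamma s) = \sum_(x <- alpha) (x - tnth gamma s) ->
  0 < c -> c <= tnth gamma s -> exists2 r, c <= al r & F (r, c) = sigma s.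
Proof.
set t := tnth gamma s => eq_tail c_gt0 le_ct.
have := card_col_cells_heavy eq_tail c.
rewrite /col_capacity c_gt0 le_ct ltnNge le_ct /= mul1n mul0n addn0 => full.
have sub : [set F (r, c) | r in col_cells F (heavy t) c] \subset heavy t.
  by apply/subsetP => v /imsetP[r]; rewrite inE => /andP[_ FU] ->.
have inj : {in col_cells F (heavy t) c &, injective (fun r => F (r, c))}.
  move=> r1 r2; rewrite !inE => /andP[/andP[_ le1] _] /andP[/andP[_ le2] _].
  exact: NAF_column_inj.
have /subset_cardP/(_ sub)/(_ (sigma s)) :
    #|[set F (r, c) | r in col_cells F (heavy t) c]| = #|heavy t|.
  by rewrite card_in_imset.
rewrite inE multiplicity_sigma leqnn => /imsetP[r].
by rewrite inE => /andP[/andP[_ le_cr] _] ->; exists r.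
Qed.

Definition row_filled (j : 'I_n) : Prop := forall c, c <= al j -> ent F j c = sigma j.

Section Rows.
Hypothesis eq_tails : forall t, \sum_(x <- gamma) (x - t) = \sum_(x <- alpha) (x - t).

Lemma row_step (s : 'I_n) : (forall j : 'I_n, j < s -> row_filled j) ->
  forall c, c <= tnth gamma s -> c <= al s /\ ent F s c = sigma s.
Proof.
move=> filled; elim=> [|c IH] le_c.
  rewrite /ent (_ : inord 0 = ord0) ?NAF_basement //.
  by apply: val_inj; rewrite /= inordK.
have [le_cs ent_c] := IH (ltnW le_c).
have lt_cN : c.+1 < N.+1 by rewrite ltnS (leq_trans le_c) ?content_le_Ncol.
have [r le_cr Frc] : exists2 r, c.+1 <= al r & F (r, inord c.+1) = sigma s.
  by have := NAF_column_contains (c := inord c.+1) (eq_tails _); rewrite !inordK //; apply.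
have [lt_rs | lt_sr | /val_inj eq_rs] := ltngtP r s.
- have := filled r lt_rs c.+1 le_cr; rewrite /ent Frc => /val_inj/perm_inj eq_sr.
  by rewrite eq_sr ltnn in lt_rs.
- (* the box (s, c), already known to hold sigma s, attacks (r, c+1) *)
  have := NAF_diagonal nafF (c := inord c.+1) (r1 := s) (r2 := r).
  by rewrite inordK //= le_cs le_cr lt_sr Frc -ent_c eqxx => /(_ isT isT isT isT).
by move: le_cr Frc; rewrite eq_rs /ent => -> ->.
Qed.

Lemma rows_filled_prefix i : (forall j : 'I_n, j < i -> tnth gamma j = al j) ->
  forall j : 'I_n, j < i -> row_filled j.
Proof.
elim: i => [//|i IH] eq_pre j; rewrite ltnS leq_eqVlt => /orP[/eqP eq_ji | lt_ji]; last first.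
  by apply: IH => // k lt_ki; apply: eq_pre; apply: ltnW.
move=> c le_c; apply: (proj2 (row_step _ _)).
  by move=> k; rewrite eq_ji => lt_k; apply: IH => // k' lt_k'i; apply: eq_pre; apply: ltnW.
by rewrite eq_pre ?eq_ji.
Qed.

Lemma content_prefix_le (s : 'I_n) : (forall j : 'I_n, j < s -> tnth gamma j = al j) ->
  tnth gamma s <= al s.
Proof. by move=> eq_pre; apply: (proj1 (row_step (rows_filled_prefix eq_pre) (leqnn _))). Qed.

End Rows.
End Content.

Definition row_filling : filling := [ffun u => sigma u.1].

Lemma ent_row_filling r c : ent row_filling r c = sigma r.
Proof. by rewrite /ent ffunE. Qed.

Lemma row_filling_NAF : NAF sigma row_filling.
Proof.
have sigma_lt (r1 r2 : 'I_n) : r1 < r2 -> (sigma r1 : nat) != sigma r2.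
  by move=> lt12; rewrite (inj_eq val_inj) (inj_eq perm_inj) neq_ltn lt12.
apply/and4P; split.
- by apply/forallP => r; rewrite ffunE.
- by apply/forallP => r; apply/forallP => c; rewrite ffunE eqxx implybT.
- apply/forallP => r1; apply/forallP => r2; apply/forallP => c; apply/implyP.
  by case/and3P => ne12 _ _; rewrite !ffunE (inj_eq perm_inj).
apply/forallP => r1; apply/forallP => r2; apply/forallP => c; apply/implyP.
by case/and4P => _ _ _ /sigma_lt; rewrite ent_row_filling ffunE.
Qed.

Lemma row_filling_content : has_content sigma alpha row_filling.
Proof.
apply/forallP => r; apply/eqP; rewrite /multiplicity card_set_sum.
under eq_bigr => u _ do rewrite ffunE (inj_eq perm_inj).
rewrite -(pair_bigA _ (fun r' (c : 'I_N.+1) => nbbox alpha r' c && (r' == r) : nat)) /=.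
rewrite (bigD1 r) //= [X in _ + X]big1 ?addn0; last first.
  by move=> r' /negbTE ne_r; apply: big1 => c _; rewrite ne_r andbF.
under eq_bigr => c _ do rewrite eqxx andbT.
by rewrite sum_ord_indicator_between; have := al_le_Ncol r; rewrite /al; lia.
Qed.

Lemma inv_triple_eq_ends a e : a != e -> inv_triple a a e.
Proof.
rewrite /inv_triple; case: (ltngtP a e) => // cmp_ae _; apply/or3P.
  by apply: Or31; apply/andP; split; lia.
by apply: Or33; apply/andP; split; lia.
Qed.

Lemma weight_row_filling : weight row_filling = 1%R.
Proof.
have maj0 : maj row_filling = 0.
  rewrite /maj big1 // => r _; rewrite big1 // => c _.
  by rewrite /is_descent !ent_row_filling ltnn.
have coinv0 : coinv row_filling = 0.
  rewrite /coinv big1 // => r _; rewrite big1 // => r' _; rewrite big1 // => c _.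
  have ne_sigma : (r : nat) != r' -> (sigma r : nat) != sigma r'.
    by rewrite !(inj_eq val_inj) (inj_eq perm_inj).
  have inv_ends c1 c2 c3 : (r : nat) != r' ->
      inv_triple (ent row_filling r c1) (ent row_filling r c2) (ent row_filling r' c3).
    by move=> /ne_sigma ne; rewrite !ent_row_filling inv_triple_eq_ends.
  have [eq_rr' | ne_rr'] := eqVneq (r : nat) r'.
    by rewrite /typeA /typeB eq_rr' ltnn !andbF.
  by rewrite !inv_ends ?andbF.
rewrite /weight maj0 coinv0 !expr0 !mul1r big1 // => r _.
by rewrite big1 // => c; rewrite !ent_row_filling eqxx.
Qed.

Lemma NAF_content_row_filling F :
  NAF sigma F -> has_content sigma alpha F -> F = row_filling.
Proof.
move=> nafF contF; apply/ffunP => -[r c]; rewrite ffunE /=.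
have [le_c | lt_c] := leqP c (al r); last exact: NAF_outside.
have filled := rows_filled_prefix nafF contF (fun=> erefl) (i := n) (fun j _ => erefl).
by have := filled r (ltn_ord r) c le_c; rewrite /ent inord_val => /val_inj.
Qed.

Lemma coefEsig_self : coefEsig alpha sigma alpha = 1%R.
Proof.
rewrite /coefEsig (big_pred1 row_filling) ?weight_row_filling // => F /=.
apply/andP/eqP => [[nafF contF] | ->]; first exact: NAF_content_row_filling.
by split; [exact: row_filling_NAF | exact: row_filling_content].
Qed.

End NonAttackingFillings.

Lemma coefEsig_eq0 n (alpha gamma : n.-tuple nat) (sigma : {perm 'I_n}) :
  (forall F : filling alpha, NAF sigma F -> ~~ has_content sigma gamma F) ->
  coefEsig alpha sigma gamma = 0%R.
Proof.
move=> noF; rewrite /coefEsig big_pred0 // => F.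
by case: (boolP (NAF _ F)) => // /noF/negbTE.
Qed.

Lemma no_content_of_sortc_lex_gt n (alpha gamma : n.-tuple nat) (sigma : {perm 'I_n})
    (F : filling alpha) :
  lex_gt (sortc gamma) (sortc alpha) -> NAF sigma F -> ~~ has_content sigma gamma F.
Proof.
move=> gt_sort nafF; apply/negP => contF.
have [t [lt_count eq_tail]] :=
  sorted_geq_lex_gt_count (sortc_sorted _) (sortc_sorted _) gt_sort.
rewrite !(perm_big _ (perm_sortc _)) /= in eq_tail.
rewrite !(seq.permP (perm_sortc _)) in lt_count.
by have := count_geq_content_le nafF contF eq_tail; rewrite leqNgt lt_count.
Qed.

Lemma no_content_of_lex_gt n (alpha gamma : n.-tuple nat) (sigma : {perm 'I_n})
    (F : filling alpha) :
  sortc gamma = sortc alpha -> lex_gt gamma alpha ->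
  NAF sigma F -> ~~ has_content sigma gamma F.
Proof.
move=> eq_sort gt_lex nafF; apply/negP => contF.
have eq_tails t : \sum_(x <- gamma) (x - t) = \sum_(x <- alpha) (x - t).
  by rewrite -(perm_big _ (perm_sortc gamma)) eq_sort (perm_big _ (perm_sortc alpha)).
have [i lt_i [eq_pre lt_at]] := lex_gt_nth gt_lex.
rewrite size_tuple in lt_i.
have eq_prefix (j : 'I_n) : j < Ordinal lt_i -> tnth gamma j = al alpha j.
  by move=> lt_ji; rewrite /al !(tnth_nth 0) eq_pre.
have := content_prefix_le nafF contF eq_tails eq_prefix.
by rewrite /al !(tnth_nth 0) leqNgt lt_at.
Qed.

Theorem mainTheorem1 (n m : nat) (alpha gamma : n.-tuple nat) (sigma : {perm 'I_n}) :
  (0 < n)%N ->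
  (\sum_(i <- alpha) i)%N = m ->
  (\sum_(i <- gamma) i)%N = m ->
  [/\ (lex_gt (sortc gamma) (sortc alpha) -> coefEsig alpha sigma gamma = 0%R),
      (sortc gamma = sortc alpha -> lex_gt gamma alpha -> coefEsig alpha sigma gamma = 0%R)
    & (gamma = alpha -> coefEsig alpha sigma gamma = 1%R)].
Proof.
move=> _ _ _; split=> [gt_sort | eq_sort gt_lex | ->]; last exact: coefEsig_self.
  by apply: coefEsig_eq0 => F; apply: no_content_of_sortc_lex_gt.
by apply: coefEsig_eq0 => F; apply: no_content_of_lex_gt.
Qed.
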